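(* For every integer $r\ge 0$ and all real $x$, $$\operatorname{sech}^{2r+1}x=\frac{(-1)^r}{(2r)!}\prod_{k=1}^{r}\Big(\frac{d^2}{dx^2}-(2k-1)^2\Big)\operatorname{sech}x=\frac{1}{(2r)!}\sum_{\rho=0}^{r}(-1)^{\rho}\,\mathcal G^r_\rho\,\frac{d^{2\rho}}{dx^{2\rho}}\operatorname{sech}x ,$$ where the integers $\mathcal G^r_\rho$ ($0\le\rho\le r$) are determined by $\mathcal G^0_0=1$, the conventions $\mathcal G^r_{-1}=\mathcal G^r_{r+1}=0$, and the recursion $\mathcal G^r_\rho=(2r-1)^2\mathcal G^{r-1}_\rho+\mathcal G^{r-1}_{\rho-1}$ for $r\ge1$, $0\le\rho\le r$. In particular $\mathcal G^r_r=1$.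
   Context: The empty product (for $r=0$) is the identity operator. *)

From Stdlib Require Import Reals Factorial.
Open Scope R_scope.

Definition sech (x : R) : R := / cosh x.

(* Given the chain D n = n-th derivative of a function g, [opchain D k n]
   is the n-th derivative of
     (d^2/dx^2 - (2k-1)^2) ... (d^2/dx^2 - 1^2) g .
   Indeed (d^2 - c) h has n-th derivative h^(n+2) - c h^(n). *)
Fixpoint opchain (D : nat -> R -> R) (k : nat) : nat -> R -> R :=
  match k with
  | O => D
  | S k' => fun n x =>
      opchain D k' (n + 2)%nat x - (2 * INR k' + 1) ^ 2 * opchain D k' n x
  end.

(* The integers G^r_rho (they are nonnegative), with G^r_rho = 0 for rho > r
   and the convention G^r_{-1} = 0 built into the match. *)
Fixpoint Gc (r rho : nat) : nat :=
  match r with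
  | O => match rho with O => 1%nat | S _ => 0%nat end
  | S r' => ((2 * r' + 1) ^ 2 * Gc r' rho
             + match rho with O => 0%nat | S p => Gc r' p end)%nat
  end.

(* Write S_N = sech^N and T = tanh, so that S_1' = -S_1 T, T' = S_1^2 and
   T^2 = 1 - S_1^2.  Differentiating twice gives the key identity
        (d^2/dx^2 - N^2) S_N = -N (N+1) S_(N+2),
   hence, by induction on r, the operator product
        prod_(k=1..r) (d^2/dx^2 - (2k-1)^2) sech = (-1)^r (2r)! S_(2r+1).
   Expanding the product gives the coefficients G^r_rho of Gc. *)
From Stdlib Require Import Reals Factorial Lra Lia FunctionalExtensionality List.
Open Scope R_scope.
Import ListNotations.

Lemma cosh_pos x : 0 < cosh x.
Proof. unfold cosh. pose proof (exp_pos x). pose proof (exp_pos (- x)). lra. Qed.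

Lemma tanh_sech x : tanh x = sinh x * sech x.
Proof. reflexivity. Qed.

Lemma cosh_sq_sub_sinh_sq x : cosh x * cosh x - sinh x * sinh x = 1.
Proof.
  unfold cosh, sinh.
  assert (Hexp : exp x * exp (- x) = 1).
  { rewrite <- exp_plus, Rplus_opp_r. exact exp_0. }
  nra.
Qed.

Lemma tanh_sq x : tanh x * tanh x = 1 - sech x ^ 2.
Proof.
  pose proof (cosh_pos x). pose proof (cosh_sq_sub_sinh_sq x) as Hpyth.
  unfold tanh, sech.
  replace (1 - (/ cosh x) ^ 2) with ((cosh x * cosh x - 1) / (cosh x * cosh x))
    by (field; lra).
  rewrite <- Hpyth. field. lra.
Qed.

Lemma derivable_pt_lim_sech x : derivable_pt_lim sech x (- sech x * tanh x).
Proof.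
  pose proof (cosh_pos x) as Hc.
  assert (H := derivable_pt_lim_div (fun _ => 1) cosh x 0 (sinh x)
                 (derivable_pt_lim_const 1 x) (derivable_pt_lim_cosh x) ltac:(lra)).
  replace (- sech x * tanh x) with ((0 * cosh x - sinh x * 1) / (cosh x)²)
    by (unfold tanh, sech, Rsqr; field; lra).
  apply derivable_pt_lim_ext with (f := div_fct (fun _ => 1) cosh); [| exact H].
  intro y. unfold div_fct, sech. pose proof (cosh_pos y). field. lra.
Qed.

Lemma derivable_pt_lim_tanh x : derivable_pt_lim tanh x (sech x ^ 2).
Proof.
  pose proof (cosh_pos x) as Hc.
  apply derivable_pt_lim_ext with (f := fun y => sinh y * sech y); [reflexivity |].
  replace (sech x ^ 2)
    with (cosh x * sech x + sinh x * (- sech x * tanh x)).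
  - exact (derivable_pt_lim_mult _ _ x _ _ (derivable_pt_lim_sinh x)
             (derivable_pt_lim_sech x)).
  - assert (Hcs : cosh x * sech x = 1) by (unfold sech; field; lra).
    pose proof (tanh_sq x) as Ht. rewrite tanh_sech in Ht.
    rewrite tanh_sech, Hcs. nra.
Qed.

Lemma derivable_pt_lim_sech_pow N x :
  derivable_pt_lim (fun y => sech y ^ N) x (- INR N * sech x ^ N * tanh x).
Proof.
  replace (- INR N * sech x ^ N * tanh x)
    with (INR N * sech x ^ Nat.pred N * (- sech x * tanh x)).
  - exact (derivable_pt_lim_comp sech (fun y => y ^ N) x _ _
             (derivable_pt_lim_sech x) (derivable_pt_lim_pow (sech x) N)).
  - destruct N; simpl; ring.
Qed.

Lemma derivable_pt_lim_sech_pow_2 N x :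
  derivable_pt_lim (fun y => - INR N * sech y ^ N * tanh y) x
    (INR N ^ 2 * sech x ^ N - INR N * (INR N + 1) * sech x ^ (N + 2)).
Proof.
  apply derivable_pt_lim_ext with
    (f := fun y => - INR N * (sech y ^ N * tanh y)); [intro; ring |].
  replace (INR N ^ 2 * sech x ^ N - INR N * (INR N + 1) * sech x ^ (N + 2))
    with (- INR N * ((- INR N * sech x ^ N * tanh x) * tanh x
                     + sech x ^ N * sech x ^ 2)).
  - apply derivable_pt_lim_scal, derivable_pt_lim_mult.
    + apply derivable_pt_lim_sech_pow.
    + apply derivable_pt_lim_tanh.
  - rewrite pow_add.
    replace (- INR N * sech x ^ N * tanh x * tanh x)
      with (- INR N * sech x ^ N * (tanh x * tanh x)) by ring.
    rewrite tanh_sq. ring.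
Qed.

(* Polynomials as coefficient lists, lowest degree first. *)
Fixpoint peval (p : list R) (t : R) : R :=
  match p with [] => 0 | a :: p' => a + t * peval p' t end.

Fixpoint padd (p q : list R) : list R :=
  match p, q with
  | [], _ => q
  | _, [] => p
  | a :: p', b :: q' => (a + b) :: padd p' q'
  end.

Definition pscale (c : R) (p : list R) : list R := map (fun a => c * a) p.

(* Formal derivative, via (a + t p)' = p + t p'. *)
Fixpoint pderiv (p : list R) : list R :=
  match p with [] => [] | _ :: p' => padd p' (0 :: pderiv p') end.

Lemma peval_padd p q t : peval (padd p q) t = peval p t + peval q t.
Proof.
  revert q; induction p as [| a p IH]; intros [| b q]; simpl; try ring.
  rewrite IH. ring.
Qed.

Lemma peval_pscale c p t : peval (pscale c p) t = c * peval p t.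
Proof. induction p as [| a p IH]; simpl; [ring | rewrite IH; ring]. Qed.

Lemma derivable_pt_lim_peval p t :
  derivable_pt_lim (peval p) t (peval (pderiv p) t).
Proof.
  induction p as [| a p IH]; simpl.
  - apply derivable_pt_lim_const.
  - rewrite peval_padd. simpl.
    replace (peval p t + (0 + t * peval (pderiv p) t))
      with (0 + (1 * peval p t + t * peval (pderiv p) t)) by ring.
    apply derivable_pt_lim_plus; [apply derivable_pt_lim_const |].
    apply derivable_pt_lim_mult; [apply derivable_pt_lim_id | exact IH].
Qed.

(* (sech * p(tanh))' = sech * q(tanh) with q = -t p + (1 - t^2) p'. *)
Definition sech_step (p : list R) : list R :=
  padd (pscale (-1) (0 :: p))
       (padd (pderiv p) (pscale (-1) (0 :: 0 :: pderiv p))).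

Lemma derivable_pt_lim_sech_poly p x :
  derivable_pt_lim (fun y => sech y * peval p (tanh y)) x
    (sech x * peval (sech_step p) (tanh x)).
Proof.
  replace (sech x * peval (sech_step p) (tanh x))
    with (- sech x * tanh x * peval p (tanh x)
          + sech x * (peval (pderiv p) (tanh x) * sech x ^ 2)).
  - apply (derivable_pt_lim_mult sech (fun y => peval p (tanh y)));
      [apply derivable_pt_lim_sech |].
    apply (derivable_pt_lim_comp tanh (peval p));
      [apply derivable_pt_lim_tanh | apply derivable_pt_lim_peval].
  - unfold sech_step. rewrite !peval_padd, !peval_pscale. simpl peval.
    replace (sech x ^ 2) with (1 - tanh x * tanh x) by (rewrite tanh_sq; ring).
    ring.
Qed.

(* The polynomial p_n with sech^(n) = sech * p_n(tanh). *)
Fixpoint sech_poly (n : nat) : list R :=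
  match n with O => [1] | S k => sech_step (sech_poly k) end.

Definition sech_deriv (n : nat) (x : R) : R := sech x * peval (sech_poly n) (tanh x).

Lemma sech_deriv_0 : sech_deriv 0 = sech.
Proof. apply functional_extensionality; intro x. unfold sech_deriv. simpl. ring. Qed.

Lemma sech_deriv_chain n x :
  derivable_pt_lim (sech_deriv n) x (sech_deriv (S n) x).
Proof. apply derivable_pt_lim_sech_poly. Qed.

(* G^r_rho vanishes above the diagonal, and G^r_r = 1 since the leading
   coefficient is only ever shifted, never multiplied. *)
Lemma Gc_big r : forall rho, (r < rho)%nat -> Gc r rho = 0%nat.
Proof.
  induction r as [| r IH]; intros [| rho] H; simpl; try lia.
  rewrite !IH by lia. lia.
Qed.

Lemma Gc_diag r : Gc r r = 1%nat.
Proof. induction r as [| r IH]; simpl; [reflexivity |]. rewrite Gc_big, IH by lia. lia. Qed.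

Section Opchain.

Variable D : nat -> R -> R.

Lemma opchain_chain :
  (forall n x, derivable_pt_lim (D n) x (D (S n) x)) ->
  forall r n x, derivable_pt_lim (opchain D r n) x (opchain D r (S n) x).
Proof.
  intros HD r; induction r as [| r IH]; intros n x; simpl.
  - apply HD.
  - apply derivable_pt_lim_minus; [| apply derivable_pt_lim_scal]; apply IH.
Qed.

Lemma opchain_expand r : forall n x,
  opchain D r n x =
  sum_f_R0 (fun rho => (-1) ^ (r + rho) * INR (Gc r rho) * D (n + 2 * rho)%nat x) r.
Proof.
  induction r as [| r IH]; intros n x.
  - simpl. rewrite Nat.add_0_r. ring.
  - set (c := (2 * INR r + 1) ^ 2).
    set (T := fun rho => (-1) ^ (r + rho) * INR (Gc r rho) * D (n + 2 * rho)%nat x).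
    (* the part coming from the term c * G^r_rho of the recursion *)
    assert (Hdiag :
      sum_f_R0 (fun rho => (-1) ^ (S r + rho) * (c * INR (Gc r rho))
                           * D (n + 2 * rho)%nat x) (S r)
      = - c * sum_f_R0 T r).
    { rewrite tech5, (Gc_big r (S r)) by lia. change (INR 0) with 0.
      rewrite ?Rmult_0_r, ?Rmult_0_l, Rplus_0_r, scal_sum. unfold T.
      apply sum_eq; intros i _. simpl pow. ring. }
    (* the part coming from the shifted term G^r_(rho-1) *)
    assert (Hshift :
      sum_f_R0 (fun rho => (-1) ^ (S r + rho)
                           * INR (match rho with O => 0%nat | S p => Gc r p end)
                           * D (n + 2 * rho)%nat x) (S r)
      = sum_f_R0 (fun rho => (-1) ^ (r + rho) * INR (Gc r rho)
                             * D (n + 2 + 2 * rho)%nat x) r).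
    { rewrite decomp_sum by lia. simpl Init.Nat.pred. change (INR 0) with 0.
      rewrite ?Rmult_0_r, ?Rmult_0_l, Rplus_0_l.
      apply sum_eq; intros i _.
      replace (S r + S i)%nat with (S (S (r + i))) by lia.
      replace (n + 2 * S i)%nat with (n + 2 + 2 * i)%nat by lia.
      simpl pow. ring. }
    change (opchain D (S r) n x)
      with (opchain D r (n + 2) x - c * opchain D r n x).
    rewrite !IH. fold T.
    unfold Rminus. rewrite <- Hshift, Ropp_mult_distr_l, <- Hdiag, <- plus_sum.
    apply sum_eq; intros i _.
    change (Gc (S r) i)
      with ((2 * r + 1) ^ 2 * Gc r i + match i with O => 0 | S p => Gc r p end)%nat.
    rewrite plus_INR, mult_INR, pow_INR, plus_INR, mult_INR. unfold c. simpl INR. ring.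
Qed.

Lemma opchain_sech :
  (forall n x, derivable_pt_lim (D n) x (D (S n) x)) -> D O = sech ->
  forall r x,
  opchain D r 0 x = (-1) ^ r * INR (fact (2 * r)) * sech x ^ (2 * r + 1).
Proof.
  intros HD HD0 r; induction r as [| r IH]; intro x.
  - simpl. rewrite HD0. ring.
  - set (c := (-1) ^ r * INR (fact (2 * r))).
    set (N := (2 * r + 1)%nat).
    (* identify the first two derivatives of opchain D r 0 = c * S_N *)
    assert (H1 : forall y, opchain D r 1 y = c * (- INR N * sech y ^ N * tanh y)).
    { intro y. apply (uniqueness_limite (opchain D r 0) y).
      - apply opchain_chain; exact HD.
      - apply derivable_pt_lim_ext with (f := fun z => c * sech z ^ N);
          [intro; symmetry; apply IH |].
        apply derivable_pt_lim_scal, derivable_pt_lim_sech_pow. }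
    assert (H2 : opchain D r 2 x
                 = c * (INR N ^ 2 * sech x ^ N
                        - INR N * (INR N + 1) * sech x ^ (N + 2))).
    { apply (uniqueness_limite (opchain D r 1) x).
      - apply opchain_chain; exact HD.
      - apply derivable_pt_lim_ext with
          (f := fun z => c * (- INR N * sech z ^ N * tanh z));
          [intro; symmetry; apply H1 |].
        apply derivable_pt_lim_scal, derivable_pt_lim_sech_pow_2. }
    simpl opchain. rewrite H2, IH. fold c N.
    replace (2 * S r)%nat with (S (S (2 * r))) by lia.
    replace (S (S (2 * r)) + 1)%nat with (N + 2)%nat by (unfold N; lia).
    change (fact (S (S (2 * r)))) with (S (S (2 * r)) * (S (2 * r) * fact (2 * r)))%nat.
    unfold c, N. rewrite !mult_INR, !S_INR, !plus_INR, !mult_INR.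
    simpl INR. simpl pow. ring.
Qed.

End Opchain.

Lemma neg1_pow_sq r : (-1) ^ r * (-1) ^ r = 1.
Proof. rewrite <- pow_add. replace (r + r)%nat with (2 * r)%nat by lia. apply pow_1_even. Qed.

Theorem mainTheorem1 :
  exists D : nat -> R -> R,
    D O = sech /\
    (forall (n : nat) (x : R), derivable_pt_lim (D n) x (D (S n) x)) /\
    (forall (r : nat) (x : R),
       sech x ^ (2 * r + 1) =
         (-1) ^ r / INR (fact (2 * r)) * opchain D r O x /\
       sech x ^ (2 * r + 1) =
         / INR (fact (2 * r)) *
           sum_f_R0 (fun rho => (-1) ^ rho * INR (Gc r rho) * D (2 * rho)%nat x) r) /\
    (forall r : nat, Gc r r = 1%nat).
Proof.
  exists sech_deriv.
  split; [exact sech_deriv_0 |]. split; [exact sech_deriv_chain |].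
  split; [| exact Gc_diag].
  intros r x.
  pose proof (INR_fact_neq_0 (2 * r)) as Hfact.
  assert (Hop : sech x ^ (2 * r + 1)
                = (-1) ^ r / INR (fact (2 * r)) * opchain sech_deriv r 0 x).
  { rewrite (opchain_sech _ sech_deriv_chain sech_deriv_0).
    unfold Rdiv.
    transitivity (((-1) ^ r * (-1) ^ r) * (INR (fact (2 * r)) * / INR (fact (2 * r)))
                  * sech x ^ (2 * r + 1)); [| ring].
    rewrite neg1_pow_sq, Rinv_r by exact Hfact. ring. }
  split; [exact Hop |].
  rewrite Hop, opchain_expand. unfold Rdiv.
  rewrite (Rmult_comm ((-1) ^ r)), Rmult_assoc. f_equal.
  rewrite scal_sum. apply sum_eq; intros i _.
  rewrite pow_add, Nat.add_0_l.
  transitivity (((-1) ^ r * (-1) ^ r) * (-1) ^ i * INR (Gc r i)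
                * sech_deriv (2 * i)%nat x); [| rewrite neg1_pow_sq]; ring.
Qed.
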